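(* Let $V$ be a finite dimensional real vector space and $n\in\mathbb N$. For $1\le k\le n$ let $\Gamma_k$ be a finitely generated cone in $V$ and $B_k$ a compact subset of $V$. Then there exists a compact subset $B$ of $V$ such that $$\bigcap_{k=1}^n(B_k+\Gamma_k)\subseteq B+\bigcap_{k=1}^n\Gamma_k.$$
   Context: A cone $\Gamma\subseteq V$ is finitely generated if there are finitely many $\omega_1,\dots,\omega_m\in V$ with $\Gamma=\sum_{j=1}^m\mathbb R_{\ge0}\omega_j$. *)

From HB Require Import structures.
From mathcomp Require Import all_boot all_order all_algebra.
From mathcomp Require Import all_classical all_reals all_analysis.
Set Implicit Arguments. Unset Strict Implicit. Unset Printing Implicit Defensive.
Import Order.TTheory GRing.Theory Num.Theory.
Import numFieldNormedType.Exports.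
Local Open Scope classical_set_scope.
Local Open Scope ring_scope.

Definition fin_gen_cone (R : realType) (d : nat) (G : set 'rV[R]_d) : Prop :=
  exists (m : nat) (w : 'I_m -> 'rV[R]_d),
    G = [set v | exists c : 'I_m -> R,
                   (forall j, 0 <= c j) /\ v = \sum_(j < m) c j *: w j].

Definition mink_sum (R : realType) (d : nat) (A C : set 'rV[R]_d) : set 'rV[R]_d :=
  [set x | exists a, A a /\ exists c, C c /\ x = a + c].

(* Bound the B_k by M and fix generators w_kj of the cones. A point x of the
   intersection, written x = b_k + sum_j c_kj w_kj for every k, is encoded
   (with one extra homogenizing coordinate equal to 1) as a nonnegative
   vector y of a linear subspace P: the equations of P say that all these
   representations give the same point and that every coordinate of b_k is
   at most M times the homogenizing coordinate.  Every nonnegative y in P is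
   a nonnegative combination of finitely many fixed nonnegative vectors of P,
   one for each possible support (a Caratheodory-type reduction), plus a
   nonnegative z in P with vanishing homogenizing coordinate.  Normalizing
   that coordinate makes the combination convex; z has all its b-parts equal
   to 0, so it encodes a point g of the intersection of the cones, and x - g
   lies in a box determined by the finitely many fixed vectors alone. *)

From HB Require Import structures.
From mathcomp Require Import all_boot all_order all_algebra.
From mathcomp Require Import all_classical all_reals all_analysis.
From mathcomp Require Import ring lra.
Import Order.TTheory GRing.Theory Num.Theory.
Local Open Scope ring_scope.

Definition nonneg_span {R : realType} {d m} (w : 'I_m -> 'rV[R]_d) : set 'rV[R]_d :=
  [set v | exists c : 'I_m -> R, (forall j, 0 <= c j) /\ v = \sum_(j < m) c j *: w j].

Lemma coord_norm_le {R : realType} {d} (v : 'rV[R]_d) i : `|v ord0 i| <= `|v|.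
Proof.
have /mapP[j _ ->] : `|v ord0 i| \in [seq `|v x.1 x.2| | x : 'I_1 * 'I_d].
  by apply/mapP; exists (ord0, i) => //=; rewrite mem_enum.
by rewrite [leRHS]/Num.Def.normr /= mx_normrE; apply/bigmax_geP; right; exists j.
Qed.

Section ConeDecomposition.
Variables (R : realType) (I : finType) (i0 : I) (P : {ffun I -> R} -> Prop).
Hypothesis P_subr : forall (t : R) {y e}, P y -> P e -> P (y - t *: e).

Definition supp (y : {ffun I -> R}) := [set i | y i != 0].

Definition basic_ray (S : {set I}) (e : {ffun I -> R}) :=
  [/\ P e, forall i, 0 <= e i, e i0 = 1 & supp e = S].

Definition ray (S : {set I}) : {ffun I -> R} :=
  if pselect (exists e, basic_ray S e) is left h then projT1 (cid h) else 0.

Lemma rayP S : (exists e, basic_ray S e) -> basic_ray S (ray S).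
Proof. by rewrite /ray; case: pselect => // h _; exact: projT2 (cid h). Qed.

Lemma P_scale c y : P y -> P (c *: y).
Proof.
by move=> Py; have := P_subr (1 - c) Py Py; rewrite scalerBl scale1r opprB addrC subrK.
Qed.

Lemma ray_supp {y} : P y -> (forall i, 0 <= y i) -> y i0 != 0 ->
  basic_ray (supp y) (ray (supp y)).
Proof.
move=> Py y_ge0 yi0; apply: rayP; exists ((y i0)^-1 *: y); split.
- exact: P_scale.
- by move=> i; rewrite ffunE mulr_ge0 // invr_ge0.
- by rewrite ffunE [_ *: _]mulVf.
- by apply/setP => i; rewrite !inE ffunE mulf_eq0 negb_or invr_eq0 yi0.
Qed.

(* Subtracting the largest multiple of [ray (supp y)] that keeps [y]
   nonnegative kills at least one coordinate of the support. *)
Lemma ray_sub_step {y} : P y -> (forall i, 0 <= y i) -> y i0 != 0 ->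
  exists2 t : R, 0 <= t & let y' := y - t *: ray (supp y) in
    [/\ P y', forall i, 0 <= y' i & (#|supp y'| < #|supp y|)%N].
Proof.
move=> Py y_ge0 yi0.
have [Pe e_ge0 ei0 se] := ray_supp Py y_ge0 yi0.
set S := supp y in Pe e_ge0 ei0 se *; set e := ray S in Pe e_ge0 ei0 se *.
have i0S : i0 \in S by rewrite inE.
have [im imS t_min] := arg_minP (fun i => y i / e i) i0S.
set t := y im / e im in t_min *.
have y_gt0 i : i \in S -> 0 < y i by rewrite inE lt0r y_ge0 andbT.
have e_gt0 i : i \in S -> 0 < e i by rewrite -se inE lt0r e_ge0 andbT.
have yS i : i \notin S -> y i = 0 by rewrite inE negbK => /eqP.
have eS i : i \notin S -> e i = 0 by rewrite -se inE negbK => /eqP.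
have y'E i : (y - t *: e) i = y i - t * e i by rewrite !ffunE.
exists t; first by rewrite divr_ge0 // ltW ?y_gt0 ?e_gt0.
split=> [|i|]; first exact: P_subr.
  rewrite y'E subr_ge0; have [iS|iS] := boolP (i \in S).
    by rewrite -ler_pdivlMr ?e_gt0 ?t_min.
  by rewrite yS // eS // mulr0.
have supp_sub : supp (y - t *: e) \subset S :\ im.
  apply/fintype.subsetP => i; rewrite !inE y'E; apply: contraR.
  rewrite negb_and negbK => /orP[/eqP->|iS].
    by rewrite /t divfK ?subrr // gt_eqF ?e_gt0.
  by rewrite yS ?eS ?inE // mulr0 subrr.
apply: leq_ltn_trans (subset_leq_card supp_sub) _.
by rewrite (cardsD1 im S) (imS : im \in S).
Qed.

Lemma ray_decomposition {y} : P y -> (forall i, 0 <= y i) ->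
  exists t : {set I} -> R, exists2 z : {ffun I -> R},
    [/\ forall S, 0 <= t S, forall S, t S = 0 \/ ray S i0 = 1,
        P z, forall i, 0 <= z i & z i0 = 0] & y = \sum_S t S *: ray S + z.
Proof.
have [N] := ubnP #|supp y|; elim: N y => // N IH y /ltnSE le_yN Py y_ge0.
have [yi0|yi0] := eqVneq (y i0) 0.
  exists (fun=> 0), y; first by split=> // S; left.
  by rewrite big1 ?add0r // => S _; rewrite scale0r.
have [t0 t0_ge0 [Py' y'_ge0 lt_supp]] := ray_sub_step Py y_ge0 yi0.
have [|t [z [t_ge0 t_ray Pz z_ge0 zi0] y'E]] := IH _ _ Py' y'_ge0.
  exact: leq_trans lt_supp le_yN.
exists (fun S => t S + (if S == supp y then t0 else 0)), z.
  split=> // S; first by rewrite addr_ge0 //; case: eqP.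
  case: eqP => [->|_]; last by rewrite addr0.
  by right; have [_ _ -> _] := ray_supp Py y_ge0 yi0.
under eq_bigr do rewrite scalerDl.
rewrite big_split /= -addrA [_ + z]addrC addrA -y'E.
rewrite (bigD1 (supp y)) //= eqxx big1 ?addr0 ?subrK // => S /negPf ->.
by rewrite scale0r.
Qed.

Lemma ray_convex_decomposition {y} : P y -> (forall i, 0 <= y i) -> y i0 = 1 ->
  exists t : {set I} -> R, exists2 z : {ffun I -> R},
    [/\ forall S, 0 <= t S, \sum_S t S = 1, P z, forall i, 0 <= z i & z i0 = 0]
    & y = \sum_S t S *: ray S + z.
Proof.
move=> Py y_ge0 yi0.
have [t [z [t_ge0 t_ray Pz z_ge0 zi0] yE]] := ray_decomposition Py y_ge0.
exists t, z => //; split=> //.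
rewrite -yi0 yE !ffunE zi0 addr0 sum_ffunE; apply: eq_bigr => S _.
by rewrite ffunE -[t S *: _]/(t S * _); case: (t_ray S) => ->; rewrite ?mul0r ?mulr1.
Qed.
End ConeDecomposition.
Arguments ray {R I} i0 P S.
Arguments ray_convex_decomposition {R I} i0 {P} P_subr {y}.

Section Encoding.
Variables (R : realType) (d n : nat) (m : 'I_n -> nat).
Variables (w : forall k, 'I_(m k) -> 'rV[R]_d) (M : R).

(* Coordinates: [None] is the homogenizing one; [(k, i, Some true)],
   [(k, i, Some false)] and [(k, i, None)] are the positive part, the
   negative part and the slack of the i-th coordinate of b_k; [(k; j)] is
   the coefficient of w k j. *)
Local Notation var :=
  (option (('I_n * 'I_d * option bool) + {k : 'I_n & 'I_(m k)})).

Definition coef (y : {ffun var -> R}) k (j : 'I_(m k)) : R :=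
  y (Some (inr (Tagged (fun k => 'I_(m k)) j))).
Definition part (y : {ffun var -> R}) k i o : R := y (Some (inl (k, i, o))).

Definition point k (y : {ffun var -> R}) : 'rV[R]_d :=
  \row_i (part y k i (Some true) - part y k i (Some false))
  + \sum_(j < m k) coef y k j *: w k j.

Lemma point_is_linear k : linear (point k).
Proof.
move=> a y z; rewrite /point scalerDr scaler_sumr addrACA -big_split /=.
congr (_ + _).
  by apply/rowP => i; rewrite !mxE /part !ffunE -![a *: _]/(a * _); ring.
by apply: eq_bigr => j _; rewrite /coef !ffunE scalerDl scalerA.
Qed.

HB.instance Definition _ k :=
  GRing.isLinear.Build R {ffun var -> R} 'rV[R]_d *:%R (point k) (point_is_linear k).

Definition feasible (y : {ffun var -> R}) :=
  (forall k k', point k y = point k' y) /\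
  (forall k i, part y k i (Some true) + part y k i (Some false) + part y k i None
               = M * y None).

Lemma feasible_subr (t : R) y e : feasible y -> feasible e -> feasible (y - t *: e).
Proof.
move=> [yk yM] [ek eM]; split=> [k k'|k i].
  by rewrite !linearB !linearZ /= (yk k k') (ek k k').
move: (yM k i) (eM k i); rewrite /part !ffunE => {}yM {}eM.
rewrite -![t *: _]/(t * _) mulrBr -yM mulrCA -eM; lra.
Qed.

Section Lift.
Variables (b : 'I_n -> 'rV[R]_d) (c : forall k, 'I_(m k) -> R).

Definition lift : {ffun var -> R} := [ffun v => match v with
  | None => 1
  | Some (inl (k, i, Some true)) => (`|b k ord0 i| + b k ord0 i) / 2
  | Some (inl (k, i, Some false)) => (`|b k ord0 i| - b k ord0 i) / 2
  | Some (inl (k, i, None)) => M - `|b k ord0 i|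
  | Some (inr (existT k j)) => c k j end].

Lemma point_lift k : point k lift = b k + \sum_(j < m k) c k j *: w k j.
Proof.
rewrite /point /coef; under eq_bigr do rewrite ffunE /=.
by congr (_ + _); apply/rowP => i; rewrite mxE /part !ffunE /=; lra.
Qed.

Lemma feasible_lift x : (forall k, x = b k + \sum_(j < m k) c k j *: w k j) ->
  feasible lift.
Proof.
move=> xE; split=> [k k'|k i]; first by rewrite !point_lift -!xE.
by rewrite /part !ffunE mulr1; lra.
Qed.

Lemma lift_ge0 : (forall k, `|b k| <= M) -> (forall k j, 0 <= c k j) ->
  forall v, 0 <= lift v.
Proof.
move=> bM c_ge0 [[[[k i] [[]|]]|[k j]]|]; rewrite ffunE //=.
- by have := ler_norm (- b k ord0 i); rewrite normrN; lra.
- by have := ler_norm (b k ord0 i); lra.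
- by have := coord_norm_le (b k) i; have := bM k; lra.
Qed.
End Lift.
Arguments feasible_lift {b c x}.
Arguments lift_ge0 {b c}.

Lemma point_homog0 z k : feasible z -> (forall v, 0 <= z v) -> z None = 0 ->
  point k z = \sum_(j < m k) coef z k j *: w k j.
Proof.
move=> [_ zM] z_ge0 z0; rewrite /point; set r := \row_i _.
suff -> : r = 0 by rewrite add0r.
apply/rowP => i; rewrite !mxE; move: (zM k i); rewrite z0 mulr0 /part.
have := z_ge0 (Some (inl (k, i, Some true))).
have := z_ge0 (Some (inl (k, i, Some false))).
have := z_ge0 (Some (inl (k, i, None))).
lra.
Qed.

Variable k0 : 'I_n.

Definition radius i : R := \sum_S `|point k0 (ray None feasible S) ord0 i|.

Lemma remainder_bounded x b c : (forall k, `|b k| <= M) -> (forall k j, 0 <= c k j) ->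
  (forall k, x = b k + \sum_(j < m k) c k j *: w k j) ->
  exists g, (forall k, nonneg_span (w k) g) /\ forall i, `|(x - g) ord0 i| <= radius i.
Proof.
move=> bM c_ge0 xE.
have lift1 : lift b c None = 1 by rewrite ffunE.
have [t [z [t_ge0 t_sum Pz z_ge0 z0] liftE]] := ray_convex_decomposition None
  feasible_subr (feasible_lift xE) (lift_ge0 bM c_ge0) lift1.
exists (point k0 z); split=> [k|i].
  rewrite (proj1 Pz k0 k) point_homog0 //; exists (coef z k); split=> // j.
  exact: z_ge0.
have -> : x - point k0 z = \sum_S t S *: point k0 (ray None feasible S).
  rewrite (xE k0) -point_lift liftE linearD linear_sum /= addrK.
  by under eq_bigr do rewrite linearZ.
rewrite summxE; apply: le_trans (ler_norm_sum _ _ _) _; apply: ler_sum => S _.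
rewrite mxE normrM ger0_norm // ler_piMl //.
by rewrite -t_sum (bigD1 S) //= lerDl sumr_ge0.
Qed.
End Encoding.
Arguments radius {R d n m} w M k0 i.
Arguments remainder_bounded {R d n m} w M k0 x b c.

Import numFieldNormedType.Exports.
Local Open Scope classical_set_scope.

Lemma compact_family_norm_bounded {R : realType} {I : finType}
    {V : normedModType R} {A : I -> set V} :
  (forall i, compact (A i)) -> exists M : R, forall i x, A i x -> `|x| <= M.
Proof.
move=> A_compact; have A_bounded i := compact_bounded (A_compact i).
have [M MA] : exists M : R, forall i, globally (A i) [set x | `|x| <= M].
  apply: (@filter_ex _ (pinfty_nbhs R)).
  exact: (@filter_forall _ _ (fun i M => globally (A i) [set x | `|x| <= M]) _ _ A_bounded).
by exists M => i x; exact: MA.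
Qed.

Lemma fin_gen_cone_generators {R : realType} {d} {I : Type} {G : I -> set 'rV[R]_d} :
  (forall i, fin_gen_cone (G i)) ->
  exists (m : I -> nat) (w : forall i, 'I_(m i) -> 'rV[R]_d),
    forall i, G i = nonneg_span (w i).
Proof.
move=> G_fg; exists (fun i => projT1 (cid (G_fg i))).
exists (fun i => projT1 (cid (projT2 (cid (G_fg i))))) => i.
exact: projT2 (cid (projT2 (cid (G_fg i)))).
Qed.

Theorem lemma3p13 (R : realType) (d n : nat)
  (Gam : 'I_n -> set 'rV[R]_d) (Bk : 'I_n -> set 'rV[R]_d) :
  (forall k, fin_gen_cone (Gam k)) ->
  (forall k, compact (Bk k)) ->
  exists B : set 'rV[R]_d, compact B /\
    \bigcap_(k in [set: 'I_n]) mink_sum (Bk k) (Gam k) `<=` mink_sum B (\bigcap_(k in [set: 'I_n]) Gam k).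
Proof.
move=> Gam_fg Bk_compact.
have [n0|n_gt0] := posnP n.
  exists [set 0]; split=> [|x _]; first exact: compact_set1.
  exists 0; split=> //; exists x; split; last by rewrite add0r.
  by move=> k; have := ltn_ord k; rewrite {2}n0.
have [m [w GamE]] := fin_gen_cone_generators Gam_fg.
have [M BkM] := compact_family_norm_bounded Bk_compact.
pose K := radius w M (Ordinal n_gt0).
exists [set v | forall i, `[- K i, K i]%classic (v ord0 i)]; split.
  apply: (@rV_compact _ _ (fun i => `[- K i, K i]%classic)) => i.
  exact: segment_compact.
move=> x x_in; have x_dec k : exists p : 'rV[R]_d * ('I_(m k) -> R),
    [/\ Bk k p.1, forall j, 0 <= p.2 j & x = p.1 + \sum_(j < m k) p.2 j *: w k j].
  have [b [Bb [g [+ ->]]]] := x_in k I.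
  by rewrite GamE => -[c [c_ge0 ->]]; exists (b, c).
pose b k := (projT1 (cid (x_dec k))).1.
pose c k := (projT1 (cid (x_dec k))).2.
have bc_spec k : [/\ Bk k (b k), forall j, 0 <= c k j
                   & x = b k + \sum_(j < m k) c k j *: w k j].
  exact: projT2 (cid (x_dec k)).
have [|||g [g_span g_near]] := remainder_bounded w M (Ordinal n_gt0) x b c.
- by move=> k; have [Bb _ _] := bc_spec k; exact: BkM Bb.
- by move=> k; have [] := bc_spec k.
- by move=> k; have [] := bc_spec k.
exists (x - g); split; last by exists g; split=> [k _|]; rewrite ?GamE ?subrK.
by move=> i; rewrite /= in_itv /= -ler_norml.
Qed.
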